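(* For all $X,Y\in\mathcal C$, the set $H=\{\Delta\in\mathrm{Bunch}\mid\forall\Delta'\in X.\ (\Delta\mathbin{;}\Delta')\in Y\}$ belongs to $\mathcal C$ and is the Heyting implication of $X$ and $Y$ in $\mathcal C$: for every $Z\in\mathcal C$, $Z\cap X\subseteq Y$ if and only if $Z\subseteq H$.
   Context: Formulas of BI: $\varphi,\psi ::= \top \mid \bot \mid \varphi\wedge\psi \mid \varphi\vee\psi \mid \varphi\to\psi \mid \mathsf{emp} \mid \varphi\ast\psi \mid \varphi -\!\!\ast\, \psi \mid a$, $a\in\mathrm{Atom}$. Bunches are finite binary trees whose leaves are formulas or empty bunches $\varnothing_m,\varnothing_a$ and whose internal nodes are labelled by the multiplicative comma ($\Delta_1\mathbin{,}\Delta_2$) or the additive semicolon ($\Delta_1\mathbin{;}\Delta_2$). A bunched context $\Delta(-)$ is a bunch with one leaf replaced by a hole; $\Delta(\Gamma)$ fills it with $\Gamma$. Bunch equivalence $\equiv$ is the least equivalence relation making $\mathbin{,}$ commutative, associative with unit $\varnothing_m$, $\mathbin{;}$ commutative, associative with unit $\varnothing_a$, and closed under contexts; $\mathrm{Bunch}$ is the set of bunches modulo $\equiv$. The cut-free BI sequent calculus ($\Delta\vdash_{\mathsf{cf}}\varphi$) has the rules: (ax) $a\vdash a$ for atoms $a$; (equiv) from $\Delta'\vdash\varphi$, $\Delta\equiv\Delta'$ infer $\Delta\vdash\varphi$; (W;) from $\Delta(\Delta_1)\vdash\varphi$ infer $\Delta(\Delta_1\mathbin{;}\Delta_2)\vdash\varphi$;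 (C;) from $\Delta(\Delta_1\mathbin{;}\Delta_1)\vdash\varphi$ infer $\Delta(\Delta_1)\vdash\varphi$; (empR) $\varnothing_m\vdash\mathsf{emp}$; (empL) from $\Delta(\varnothing_m)\vdash\varphi$ infer $\Delta(\mathsf{emp})\vdash\varphi$; ($\ast$R) from $\Delta_1\vdash\varphi$, $\Delta_2\vdash\psi$ infer $\Delta_1\mathbin{,}\Delta_2\vdash\varphi\ast\psi$; ($\ast$L) from $\Delta(\varphi\mathbin{,}\psi)\vdash\chi$ infer $\Delta(\varphi\ast\psi)\vdash\chi$; ($-\!\ast$R) from $\Delta\mathbin{,}\varphi\vdash\psi$ infer $\Delta\vdash\varphi-\!\!\ast\,\psi$; ($-\!\ast$L) from $\Delta_1\vdash\varphi$, $\Delta(\Delta_2\mathbin{,}\psi)\vdash\chi$ infer $\Delta((\Delta_1\mathbin{,}\Delta_2)\mathbin{,}(\varphi-\!\!\ast\,\psi))\vdash\chi$; ($\top$R) $\varnothing_a\vdash\top$; ($\top$L) from $\Delta(\varnothing_a)\vdash\varphi$ infer $\Delta(\top)\vdash\varphi$; ($\wedge$R) from $\Delta_1\vdash\varphi$, $\Delta_2\vdash\psi$ infer $\Delta_1\mathbin{;}\Delta_2\vdash\varphi\wedge\psi$; ($\wedge$L) from $\Delta(\varphi\mathbin{;}\psi)\vdash\chi$ infer $\Delta(\varphi\wedge\psi)\vdash\chi$; ($\to$R) from $\Delta\mathbin{;}\varphi\vdash\psi$ infer $\Delta\vdash\varphi\to\psi$; ($\to$L) from $\Delta_1\vdash\varphi$,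 $\Delta(\Delta_2\mathbin{;}\psi)\vdash\chi$ infer $\Delta((\Delta_1\mathbin{;}\Delta_2)\mathbin{;}(\varphi\to\psi))\vdash\chi$; ($\bot$L) $\Delta(\bot)\vdash\varphi$; ($\vee$R1/2) from $\Delta\vdash\varphi$ (resp. $\Delta\vdash\psi$) infer $\Delta\vdash\varphi\vee\psi$; ($\vee$L) from $\Delta(\varphi)\vdash\chi$, $\Delta(\psi)\vdash\chi$ infer $\Delta(\varphi\vee\psi)\vdash\chi$. (No cut rule.) For a formula $\varphi$, $[\![\varphi]\!]^{\mathrm{out}}=\{\Delta\in\mathrm{Bunch}\mid\Delta\vdash_{\mathsf{cf}}\varphi\}$. For $X\subseteq\mathrm{Bunch}$, $\mathrm{cl}(X)=\bigcap\{[\![\varphi]\!]^{\mathrm{out}}\mid X\subseteq[\![\varphi]\!]^{\mathrm{out}}\}$, and $\mathcal C=\{X\subseteq\mathrm{Bunch}\mid X=\mathrm{cl}(X)\}$. *)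

Set Implicit Arguments.

Section BI.
Variable Atom : Type.

Inductive form : Type :=
| FTop | FBot
| FAnd (p q : form) | FOr (p q : form) | FImp (p q : form)
| FEmp | FStar (p q : form) | FWand (p q : form)
| FAtom (a : Atom).

Inductive bunch : Type :=
| BForm (p : form)
| BEmpM
| BEmpA
| BComma (d1 d2 : bunch)
| BSemi (d1 d2 : bunch).

Inductive ctx : Type :=
| CHole
| CCommaL (c : ctx) (d : bunch)
| CCommaR (d : bunch) (c : ctx)
| CSemiL (c : ctx) (d : bunch)
| CSemiR (d : bunch) (c : ctx).

Fixpoint fill (c : ctx) (g : bunch) : bunch :=
  match c with
  | CHole => g
  | CCommaL c d => BComma (fill c g) d
  | CCommaR d c => BComma d (fill c g)
  | CSemiL c d => BSemi (fill c g) d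
  | CSemiR d c => BSemi d (fill c g)
  end.

Inductive bequiv : bunch -> bunch -> Prop :=
| beq_refl d : bequiv d d
| beq_sym d1 d2 : bequiv d1 d2 -> bequiv d2 d1
| beq_trans d1 d2 d3 : bequiv d1 d2 -> bequiv d2 d3 -> bequiv d1 d3
| beq_comma_comm d1 d2 : bequiv (BComma d1 d2) (BComma d2 d1)
| beq_comma_assoc d1 d2 d3 :
    bequiv (BComma d1 (BComma d2 d3)) (BComma (BComma d1 d2) d3)
| beq_comma_unit d : bequiv (BComma d BEmpM) d
| beq_semi_comm d1 d2 : bequiv (BSemi d1 d2) (BSemi d2 d1)
| beq_semi_assoc d1 d2 d3 :
    bequiv (BSemi d1 (BSemi d2 d3)) (BSemi (BSemi d1 d2) d3)
| beq_semi_unit d : bequiv (BSemi d BEmpA) d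
| beq_ctx c d1 d2 : bequiv d1 d2 -> bequiv (fill c d1) (fill c d2).

Inductive cf : bunch -> form -> Prop :=
| cf_ax a : cf (BForm (FAtom a)) (FAtom a)
| cf_equiv d d' p : cf d' p -> bequiv d d' -> cf d p
| cf_W c d1 d2 p : cf (fill c d1) p -> cf (fill c (BSemi d1 d2)) p
| cf_C c d1 p : cf (fill c (BSemi d1 d1)) p -> cf (fill c d1) p
| cf_empR : cf BEmpM FEmp
| cf_empL c p : cf (fill c BEmpM) p -> cf (fill c (BForm FEmp)) p
| cf_starR d1 d2 p q : cf d1 p -> cf d2 q -> cf (BComma d1 d2) (FStar p q)
| cf_starL c p q r :
    cf (fill c (BComma (BForm p) (BForm q))) r -> cf (fill c (BForm (FStar p q))) r
| cf_wandR d p q : cf (BComma d (BForm p)) q -> cf d (FWand p q)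
| cf_wandL c d1 d2 p q r :
    cf d1 p -> cf (fill c (BComma d2 (BForm q))) r ->
    cf (fill c (BComma (BComma d1 d2) (BForm (FWand p q)))) r
| cf_topR : cf BEmpA FTop
| cf_topL c p : cf (fill c BEmpA) p -> cf (fill c (BForm FTop)) p
| cf_andR d1 d2 p q : cf d1 p -> cf d2 q -> cf (BSemi d1 d2) (FAnd p q)
| cf_andL c p q r :
    cf (fill c (BSemi (BForm p) (BForm q))) r -> cf (fill c (BForm (FAnd p q))) r
| cf_impR d p q : cf (BSemi d (BForm p)) q -> cf d (FImp p q)
| cf_impL c d1 d2 p q r :
    cf d1 p -> cf (fill c (BSemi d2 (BForm q))) r ->
    cf (fill c (BSemi (BSemi d1 d2) (BForm (FImp p q)))) r
| cf_botL c p : cf (fill c (BForm FBot)) p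
| cf_orR1 d p q : cf d p -> cf d (FOr p q)
| cf_orR2 d p q : cf d q -> cf d (FOr p q)
| cf_orL c p q r :
    cf (fill c (BForm p)) r -> cf (fill c (BForm q)) r -> cf (fill c (BForm (FOr p q))) r.

(* Sets of bunches are predicates on (representative) bunches. *)
Definition bset := bunch -> Prop.

Definition out (p : form) : bset := fun d => cf d p.

Definition subset (X Y : bset) : Prop := forall d, X d -> Y d.
Definition seteq (X Y : bset) : Prop := forall d, X d <-> Y d.

Definition cl (X : bset) : bset :=
  fun d => forall p, subset X (out p) -> out p d.

Definition inC (X : bset) : Prop := seteq X (cl X).

Definition heyting_imp (X Y : bset) : bset :=
  fun d => forall d', X d' -> Y (BSemi d d').

End BI.

(* Closed sets are intersections of sets [[φ]]^out, so a closed set contains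
   Δ' as soon as it contains some Δ with Δ ⊢ φ implying Δ' ⊢ φ for all φ; with
   weakening and contraction for ';' this gives the adjunction.  For the
   closure of H, read a bunch Δ' as a formula ⌜Δ'⌝ (',' ';' ∅m ∅a become
   ∗ ∧ emp ⊤).  Then Γ;Δ' ⊢ ψ iff Γ ⊢ ⌜Δ'⌝ → ψ, using the left rules in one
   direction and, in the other, invertibility of →R and of the left rules for
   ∗ ∧ emp ⊤.  So if Y ⊆ [[ψ]]^out then H ⊆ [[⌜Δ'⌝ → ψ]]^out for each Δ' ∈ X,
   and every Γ ∈ cl(H) satisfies Γ;Δ' ⊢ ψ, i.e. Γ;Δ' ∈ cl(Y) = Y. *)

From Stdlib Require Import Setoid.

Set Implicit Arguments.

#[local] Arguments BEmpM {Atom}.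
#[local] Arguments BEmpA {Atom}.
#[local] Arguments CHole {Atom}.
#[local] Arguments FEmp {Atom}.
#[local] Arguments FTop {Atom}.

Section Closure.
Variable Atom : Type.
Implicit Types (X Y Z : bset Atom) (d e : bunch Atom).

Lemma inC_intro X : subset (cl X) X -> inC X.
Proof. intros Hcl d; split; [intros Xd p Hp; exact (Hp d Xd) | apply Hcl]. Qed.

Lemma inC_admissible Z d e :
  inC Z -> (forall p, cf d p -> cf e p) -> Z d -> Z e.
Proof. intros HZ Hde Zd; apply HZ; intros p Hp; exact (Hde p (Hp d Zd)). Qed.

Lemma inC_weakenl Z d e : inC Z -> Z d -> Z (BSemi d e).
Proof. intro HZ; apply (inC_admissible HZ); intros p Hp; exact (cf_W CHole d e Hp). Qed.

Lemma inC_weakenr Z d e : inC Z -> Z d -> Z (BSemi e d).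
Proof.
  intro HZ; apply (inC_admissible HZ); intros p Hp.
  exact (cf_equiv (cf_W CHole d e Hp) (beq_semi_comm e d)).
Qed.

Lemma inC_contract Z d : inC Z -> Z (BSemi d d) -> Z d.
Proof. intro HZ; apply (inC_admissible HZ); intros p Hp; exact (cf_C CHole d Hp). Qed.

End Closure.

Section Inversion.
Variable Atom : Type.
Notation form := (form Atom).
Notation bunch := (bunch Atom).
Notation ctx := (ctx Atom).

Fixpoint ctx_comp (c1 c2 : ctx) : ctx :=
  match c1 with
  | CHole => c2
  | CCommaL c d => CCommaL (ctx_comp c c2) d
  | CCommaR d c => CCommaR d (ctx_comp c c2)
  | CSemiL c d => CSemiL (ctx_comp c c2) d
  | CSemiR d c => CSemiR d (ctx_comp c c2)
  end.

Lemma fill_ctx_comp c1 c2 g : fill (ctx_comp c1 c2) g = fill c1 (fill c2 g).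
Proof. induction c1; simpl; congruence. Qed.

Inductive unpacks : form -> bunch -> Prop :=
| unpacks_emp : unpacks FEmp BEmpM
| unpacks_top : unpacks FTop BEmpA
| unpacks_star p q : unpacks (FStar p q) (BComma (BForm p) (BForm q))
| unpacks_and p q : unpacks (FAnd p q) (BSemi (BForm p) (BForm q)).

(* Replacing several occurrences of [A] at once is what lets the inversion
   argument pass through contraction. *)
Inductive replaces (A : form) (B : bunch) : bunch -> bunch -> Prop :=
| replaces_keep p : replaces A B (BForm p) (BForm p)
| replaces_leaf : replaces A B (BForm A) B
| replaces_empM : replaces A B BEmpM BEmpM
| replaces_empA : replaces A B BEmpA BEmpA
| replaces_comma d1 d2 e1 e2 :
    replaces A B d1 e1 -> replaces A B d2 e2 ->
    replaces A B (BComma d1 d2) (BComma e1 e2)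
| replaces_semi d1 d2 e1 e2 :
    replaces A B d1 e1 -> replaces A B d2 e2 ->
    replaces A B (BSemi d1 d2) (BSemi e1 e2).

Section Replaces.
Variables (A : form) (B : bunch).

Lemma replaces_refl d : replaces A B d d.
Proof. induction d; constructor; auto. Qed.

Lemma replaces_fill_hole c : replaces A B (fill c (BForm A)) (fill c B).
Proof. induction c; simpl; constructor; auto using replaces_leaf, replaces_refl. Qed.

Lemma replaces_fill_inv c g e : replaces A B (fill c g) e ->
  exists c' g', e = fill c' g' /\ replaces A B g g' /\
    forall h h', replaces A B h h' -> replaces A B (fill c h) (fill c' h').
Proof.
  revert e; induction c as [|c IH d|d c IH|c IH d|d c IH]; simpl; intros e He.
  - exists CHole, e; auto.
  - inversion He as [| | | |? ? e1 e2 H1 H2|]; subst.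
    destruct (IH _ H1) as (c' & g' & -> & Hg & Hc).
    exists (CCommaL c' e2), g'; split; [|split]; simpl; auto using replaces_comma.
  - inversion He as [| | | |? ? e1 e2 H1 H2|]; subst.
    destruct (IH _ H2) as (c' & g' & -> & Hg & Hc).
    exists (CCommaR e1 c'), g'; split; [|split]; simpl; auto using replaces_comma.
  - inversion He as [| | | | |? ? e1 e2 H1 H2]; subst.
    destruct (IH _ H1) as (c' & g' & -> & Hg & Hc).
    exists (CSemiL c' e2), g'; split; [|split]; simpl; auto using replaces_semi.
  - inversion He as [| | | | |? ? e1 e2 H1 H2]; subst.
    destruct (IH _ H2) as (c' & g' & -> & Hg & Hc).
    exists (CSemiR e1 c'), g'; split; [|split]; simpl; auto using replaces_semi.
Qed.

Lemma replaces_fill_form c p e : replaces A B (fill c (BForm p)) e ->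
  exists c', (forall h h', replaces A B h h' -> replaces A B (fill c h) (fill c' h')) /\
    (e = fill c' (BForm p) \/ (p = A /\ e = fill c' B)).
Proof.
  intro He; destruct (replaces_fill_inv c (BForm p) He) as (c' & g' & -> & Hg & Hc).
  exists c'; split; [exact Hc|]; inversion Hg; auto.
Qed.

Local Ltac invert_replaces :=
  repeat match goal with
  | H : replaces _ _ (BComma _ _) _ |- _ => inversion H; subst; clear H
  | H : replaces _ _ (BSemi _ _) _ |- _ => inversion H; subst; clear H
  | H : replaces _ _ BEmpM _ |- _ => inversion H; subst; clear H
  | H : replaces _ _ BEmpA _ |- _ => inversion H; subst; clear H
  end.

Local Ltac bequiv_axiom :=
  first [ apply beq_comma_comm | apply beq_comma_assoc | apply beq_comma_unit
        | apply beq_semi_comm | apply beq_semi_assoc | apply beq_semi_unit ].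

Lemma replaces_bequiv d e : bequiv d e ->
  (forall d', replaces A B d d' -> exists e', replaces A B e e' /\ bequiv d' e') /\
  (forall e', replaces A B e e' -> exists d', replaces A B d d' /\ bequiv d' e').
Proof.
  induction 1 as [d|d e _ [IH1 IH2]|d1 d2 d3 _ [IH1 IH1'] _ [IH2 IH2']| | | | | |
                  |c d e _ [IH1 IH2]];
    split; intros x Hx.
  all: try solve [invert_replaces; eexists; split;
                  [repeat (eassumption || constructor) | bequiv_axiom]].
  - exists x; split; [exact Hx | apply beq_refl].
  - exists x; split; [exact Hx | apply beq_refl].
  - destruct (IH2 _ Hx) as (y & Hy & E); exists y; split; [exact Hy | now apply beq_sym].
  - destruct (IH1 _ Hx) as (y & Hy & E); exists y; split; [exact Hy | now apply beq_sym].
  - destruct (IH1 _ Hx) as (y & Hy & E); destruct (IH2 _ Hy) as (z & Hz & E').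
    exists z; split; [exact Hz | exact (beq_trans E E')].
  - destruct (IH2' _ Hx) as (y & Hy & E); destruct (IH1' _ Hy) as (z & Hz & E').
    exists z; split; [exact Hz | exact (beq_trans E' E)].
  - destruct (replaces_fill_inv c d Hx) as (c' & g' & -> & Hg & Hc).
    destruct (IH1 _ Hg) as (y & Hy & E).
    exists (fill c' y); split; [exact (Hc _ _ Hy) | exact (beq_ctx c' E)].
  - destruct (replaces_fill_inv c e Hx) as (c' & g' & -> & Hg & Hc).
    destruct (IH2 _ Hg) as (y & Hy & E).
    exists (fill c' y); split; [exact (Hc _ _ Hy) | exact (beq_ctx c' E)].
Qed.

End Replaces.

Lemma cf_replaces A B d r : unpacks A B ->
  cf d r -> forall e, replaces A B d e -> cf e r.
Proof.
  intros HAB; induction 1 as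
    [a|d d' p _ IH Hequiv|c d1 d2 p _ IH|c d1 p _ IH| |c p _ IH
    |d1 d2 p q _ IH1 _ IH2|c p q r _ IH|d p q _ IH|c d1 d2 p q r _ IH1 _ IH2
    | |c p _ IH|d1 d2 p q _ IH1 _ IH2|c p q r _ IH|d p q _ IH
    |c d1 d2 p q r _ IH1 _ IH2|c p|d p q _ IH|d p q _ IH|c p q r _ IH1 _ IH2];
    intros x Hx.
  all: try solve [inversion Hx; subst; constructor; auto
                 | constructor; apply IH; constructor; auto using replaces_keep].
  - inversion Hx; subst; [constructor | inversion HAB].
  - destruct (proj1 (replaces_bequiv A B Hequiv) _ Hx) as (y & Hy & E).
    exact (cf_equiv (IH _ Hy) E).
  - destruct (replaces_fill_inv c _ Hx) as (c' & g' & -> & Hg & Hc).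
    inversion Hg; subst; apply cf_W, IH, Hc; assumption.
  - destruct (replaces_fill_inv c _ Hx) as (c' & g' & -> & Hg & Hc).
    apply cf_C, IH, Hc; constructor; assumption.
  - destruct (replaces_fill_form c _ Hx) as (c' & Hc & [-> | [<- ->]]);
      [apply cf_empL | inversion HAB; subst]; apply IH, Hc; repeat constructor.
  - destruct (replaces_fill_form c _ Hx) as (c' & Hc & [-> | [<- ->]]);
      [apply cf_starL | inversion HAB; subst]; apply IH, Hc; repeat constructor.
  - destruct (replaces_fill_inv c _ Hx) as (c' & g' & -> & Hg & Hc).
    inversion Hg as [| | | |? ? e12 ew H12 Hw|]; subst.
    inversion H12; subst; inversion Hw; subst; [|inversion HAB].
    apply cf_wandL; [auto|]; apply IH2, Hc; repeat constructor; assumption.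
  - destruct (replaces_fill_form c _ Hx) as (c' & Hc & [-> | [<- ->]]);
      [apply cf_topL | inversion HAB; subst]; apply IH, Hc; repeat constructor.
  - destruct (replaces_fill_form c _ Hx) as (c' & Hc & [-> | [<- ->]]);
      [apply cf_andL | inversion HAB; subst]; apply IH, Hc; repeat constructor.
  - destruct (replaces_fill_inv c _ Hx) as (c' & g' & -> & Hg & Hc).
    inversion Hg as [| | | | |? ? e12 ei H12 Hi]; subst.
    inversion H12; subst; inversion Hi; subst; [|inversion HAB].
    apply cf_impL; [auto|]; apply IH2, Hc; repeat constructor; assumption.
  - destruct (replaces_fill_form c _ Hx) as (c' & Hc & [-> | [<- ->]]);
      [apply cf_botL | inversion HAB].
  - destruct (replaces_fill_form c _ Hx) as (c' & Hc & [-> | [<- ->]]).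
    + apply cf_orL; [apply IH1 | apply IH2]; apply Hc; constructor.
    + inversion HAB.
Qed.

Lemma cf_unpack_iff A B c r : unpacks A B ->
  cf (fill c (BForm A)) r <-> cf (fill c B) r.
Proof.
  intro HAB; split; intro H.
  - exact (cf_replaces HAB H (replaces_fill_hole A B c)).
  - destruct HAB; [apply cf_empL | apply cf_topL | apply cf_starL | apply cf_andL];
      exact H.
Qed.

Fixpoint form_of_bunch (g : bunch) : form :=
  match g with
  | BForm p => p
  | BEmpM => FEmp
  | BEmpA => FTop
  | BComma g1 g2 => FStar (form_of_bunch g1) (form_of_bunch g2)
  | BSemi g1 g2 => FAnd (form_of_bunch g1) (form_of_bunch g2)
  end.

Lemma cf_form_of_bunch_iff g c r :
  cf (fill c (BForm (form_of_bunch g))) r <-> cf (fill c g) r.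
Proof.
  revert c r; induction g as [p| | |g1 IH1 g2 IH2|g1 IH1 g2 IH2]; intros c r; simpl.
  - reflexivity.
  - exact (cf_unpack_iff c r unpacks_emp).
  - exact (cf_unpack_iff c r unpacks_top).
  - rewrite (cf_unpack_iff c r (unpacks_star _ _)).
    specialize (IH1 (ctx_comp c (CCommaL CHole (BForm (form_of_bunch g2)))) r).
    specialize (IH2 (ctx_comp c (CCommaR g1 CHole)) r).
    rewrite !fill_ctx_comp in IH1, IH2; simpl in IH1, IH2.
    now rewrite IH1, IH2.
  - rewrite (cf_unpack_iff c r (unpacks_and _ _)).
    specialize (IH1 (ctx_comp c (CSemiL CHole (BForm (form_of_bunch g2)))) r).
    specialize (IH2 (ctx_comp c (CSemiR g1 CHole)) r).
    rewrite !fill_ctx_comp in IH1, IH2; simpl in IH1, IH2.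
    now rewrite IH1, IH2.
Qed.

Lemma cf_impR_inv (d : bunch) (p q : form) :
  cf d (FImp p q) -> cf (BSemi d (BForm p)) q.
Proof.
  intro H; remember (FImp p q) as f eqn:E.
  induction H as
    [|d d' f _ IH Hequiv|c d1 d2 f _ IH|c d1 f _ IH| |c f _ IH
    | |c p1 q1 f _ IH| |c d1 d2 p1 q1 f Hd1 _ _ IH
    | |c f _ IH| |c p1 q1 f _ IH|d p1 q1 Hd _
    |c d1 d2 p1 q1 f Hd1 _ _ IH|c f| | |c p1 q1 f _ IH1 _ IH2];
    try discriminate; try subst f.
  - exact (cf_equiv (IH eq_refl) (beq_ctx (CSemiL CHole (BForm p)) Hequiv)).
  - exact (cf_W (CSemiL c (BForm p)) d1 d2 (IH eq_refl)).
  - exact (cf_C (CSemiL c (BForm p)) d1 (IH eq_refl)).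
  - exact (cf_empL (CSemiL c (BForm p)) (IH eq_refl)).
  - exact (cf_starL (CSemiL c (BForm p)) p1 q1 (IH eq_refl)).
  - exact (cf_wandL (CSemiL c (BForm p)) d2 q1 Hd1 (IH eq_refl)).
  - exact (cf_topL (CSemiL c (BForm p)) (IH eq_refl)).
  - exact (cf_andL (CSemiL c (BForm p)) p1 q1 (IH eq_refl)).
  - injection E as -> ->; exact Hd.
  - exact (cf_impL (CSemiL c (BForm p)) d2 q1 Hd1 (IH eq_refl)).
  - exact (cf_botL (CSemiL c (BForm p)) q).
  - exact (cf_orL (CSemiL c (BForm p)) p1 q1 (IH1 eq_refl) (IH2 eq_refl)).
Qed.

Lemma cf_imp_form_of_bunch_iff d g r :
  cf d (FImp (form_of_bunch g) r) <-> cf (BSemi d g) r.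
Proof.
  rewrite <- (cf_form_of_bunch_iff g (CSemiR d CHole)); simpl; split.
  - apply cf_impR_inv.
  - apply cf_impR.
Qed.

End Inversion.

Section Heyting.
Variable Atom : Type.
Implicit Types (X Y Z : bset Atom).

Lemma inC_heyting_imp X Y : inC Y -> inC (heyting_imp X Y).
Proof.
  intro HY; apply inC_intro; intros g Hg d Xd.
  apply HY; intros r Hr.
  apply cf_imp_form_of_bunch_iff, Hg; intros h Hh.
  apply cf_imp_form_of_bunch_iff, Hr, Hh, Xd.
Qed.

Lemma heyting_imp_adjunction X Y Z : inC X -> inC Y -> inC Z ->
  subset (fun d => Z d /\ X d) Y <-> subset Z (heyting_imp X Y).
Proof.
  intros HX HY HZ; split.
  - intros HZX d Zd e Xe.
    apply HZX; split; [apply inC_weakenl | apply inC_weakenr]; assumption.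
  - intros HZH d [Zd Xd].
    apply inC_contract; [exact HY | exact (HZH d Zd d Xd)].
Qed.

End Heyting.

Theorem proposition6p5 (Atom : Type) (X Y : bset Atom) :
  inC X -> inC Y ->
  inC (heyting_imp X Y) /\
  (forall Z : bset Atom, inC Z ->
     (subset (fun d => Z d /\ X d) Y <-> subset Z (heyting_imp X Y))).
Proof.
  intros HX HY; split.
  - exact (inC_heyting_imp X HY).
  - intros Z HZ; exact (heyting_imp_adjunction HX HY HZ).
Qed.
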